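(* $m_5(6)\geq 20$. Specifically, the $6$-uniform family $\mathcal T_0\circ\binom{[3]}{2}$ (with $300$ edges) is intersecting, has covering number $6$, and satisfies $\gamma_5\big(\mathcal T_0\circ\binom{[3]}{2}\big)\geq 20$.
   Context: $\mathcal T_0\subset\binom{[6]}{3}$ is $\{\{1,2,3\},\{1,2,4\},\{3,4,5\},\{3,4,6\},\{1,5,6\},\{2,5,6\},\{1,3,5\},\{2,4,5\},\{1,4,6\},\{2,3,6\}\}$. Wreath product: for $\mathcal A\subset 2^X$, $\mathcal B\subset 2^{[n]}$, take disjoint copies $X_1,\dots,X_n$ of $X$ with copies $\mathcal A_i$ of $\mathcal A$; for $B=\{i_1,\dots,i_r\}\in\mathcal B$ let $\mathcal A^B=\{A_{i_1}\cup\dots\cup A_{i_r}:A_{i_s}\in\mathcal A_{i_s}\}$, and $\mathcal A\circ\mathcal B=\bigcup_{B\in\mathcal B}\mathcal A^B$. For a family $\mathcal F$ on ground set $Z$, $\gamma_j(\mathcal F)=\min_{S\subset Z,|S|=j}|\{F\in\mathcal F:F\cap S=\emptyset\}|$; $\tau$ is the minimum size of a set meeting all members. $m_j(k)$ is the maximum of $\gamma_j(\mathcal F)$ over all intersecting $k$-uniform families $\mathcal F$ with $\tau(\mathcal F)=k$. *)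

From mathcomp Require Import all_boot.
Set Implicit Arguments. Unset Strict Implicit. Unset Printing Implicit Defensive.

Section Families.
Variable T : finType.

Definition uniform (k : nat) (F : {set {set T}}) : Prop :=
  forall E, E \in F -> #|E| = k.

Definition intersecting (F : {set {set T}}) : Prop :=
  forall E E', E \in F -> E' \in F -> ~~ [disjoint E & E'].

(* covering number: minimum size of a set meeting all members
   (default #|T| if no such set exists, which cannot happen when set0 \notin F) *)
Definition tau (F : {set {set T}}) : nat :=
  \big[minn/#|T|]_(S : {set T} | [forall E in F, ~~ [disjoint E & S]]) #|S|.

(* gamma_j(F) = min over j-subsets S of the ground set of the number of
   members disjoint from S (default #|F| if j > #|T|) *)
Definition gamma (j : nat) (F : {set {set T}}) : nat :=
  \big[minn/#|F|]_(S : {set T} | #|S| == j) #|[set E in F | [disjoint E & S]]|.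
End Families.

(* m_j(k) >= c : some intersecting k-uniform family F (on some finite ground
   set) with tau(F) = k has gamma_j(F) >= c. *)
Definition m_ge (j k c : nat) : Prop :=
  exists (Z : finType) (F : {set {set Z}}),
    [/\ uniform k F, intersecting F, tau F = k & c <= gamma j F].

(* Wreath product A o B: ground set 'I_n * X (copy i of X is {i} * X).
   F is in A o B iff for some B in B, the trace of F on copy i is a member
   of A for i in B and empty for i outside B. *)
Definition wreath (X : finType) (n : nat) (A : {set {set X}}) (B : {set {set 'I_n}})
  : {set {set ('I_n * X)}} :=
  [set F : {set ('I_n * X)} | [exists Bs in B, forall i : 'I_n,
     if i \in Bs then [set x | (i, x) \in F] \in A
     else [set x | (i, x) \in F] == set0]].

Definition binom_set (n r : nat) : {set {set 'I_n}} := [set B : {set 'I_n} | #|B| == r].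

(* [6] is represented by 'I_6, element a of [6] by the ordinal a-1 *)
Definition tri (a b c : nat) : {set 'I_6} :=
  [set (inord a.-1 : 'I_6); inord b.-1; inord c.-1].

Definition T0 : {set {set 'I_6}} :=
  [set tri 1 2 3; tri 1 2 4; tri 3 4 5; tri 3 4 6; tri 1 5 6;
       tri 2 5 6; tri 1 3 5; tri 2 4 5; tri 1 4 6; tri 2 3 6].

Definition F0 : {set {set ('I_3 * 'I_6)}} := wreath T0 (binom_set 3 2).

From mathcomp Require Import all_boot zify.
Set Implicit Arguments. Unset Strict Implicit. Unset Printing Implicit Defensive.

(* Write S_1, S_2, S_3 for the traces of S on the three copies of [6] and d(A)
   for the number of triples of T0 disjoint from A. The members of
   T0 o binom([3],2) disjoint from S number d(S_1)d(S_2) + d(S_1)d(S_3) + d(S_2)d(S_3).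
   Since T0 is a 2-(6,3,2) design, d(A) >= 10, 5, 2 when |A| = 0, 1, 2. Hence a
   transversal has two traces of size >= 3, so tau = 6, and a 5-set leaves at
   least min (d d + d d + d d) = 20 members untouched, attained at sizes (3,2,0). *)

Lemma bigminn_le (I : finType) (P : pred I) (G : I -> nat) m j :
  P j -> \big[minn/m]_(i | P i) G i <= G j.
Proof.
move=> Pj; have := mem_index_enum j; rewrite unlock.
elim: (index_enum I) => //= i r IHr; rewrite inE => /predU1P [<- | /IHr leGj].
  by rewrite Pj geq_minl.
by case: (P i); rewrite ?geq_min leGj ?orbT.
Qed.

Section HittingSets.
Variable T : finType.
Implicit Types (F : {set {set T}}) (S : {set T}).

Definition hitting F S := [forall E in F, ~~ [disjoint E & S]].

Definition avoiding F S := [set E in F | [disjoint E & S]].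

Lemma in_avoiding F S E : (E \in avoiding F S) = (E \in F) && [disjoint E & S].
Proof. by rewrite inE. Qed.

Lemma avoiding_set0 S : avoiding [set set0] S = [set set0].
Proof.
apply/setP => E; rewrite in_avoiding in_set1.
by have [-> | //] := eqVneq E set0; rewrite /= -setI_eq0 set0I eqxx.
Qed.

Lemma hittingE F S : hitting F S = (avoiding F S == set0).
Proof.
apply/forall_inP/eqP => [hitS | noE E EF]; last first.
  by apply/negP => ES; move/setP/(_ E): noE; rewrite !inE EF ES.
by apply/setP => E; rewrite !inE; apply/andP => -[/hitS/negP].
Qed.

Lemma avoiding0 F : avoiding F set0 = F.
Proof. by apply/setP => E; rewrite !inE -setI_eq0 setI0 eqxx andbT. Qed.

Lemma intersecting_hitting F E : intersecting F -> E \in F -> hitting F E.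
Proof. by move=> intF EF; apply/forall_inP => E' E'F; apply: intF. Qed.


Lemma tau_le_hitting F S : hitting F S -> tau F <= #|S|.
Proof. exact: bigminn_le. Qed.

Lemma tau_ge F m :
  m <= #|T| -> (forall S, hitting F S -> m <= #|S|) -> m <= tau F.
Proof.
move=> leT hit_ge; rewrite /tau; elim/big_ind: _ => // x y.
by rewrite leq_min => -> ->.
Qed.

Lemma gamma_ge F j c : c <= #|F| ->
  (forall S, #|S| = j -> c <= #|avoiding F S|) -> c <= gamma j F.
Proof.
move=> leF avoid_ge; rewrite /gamma; elim/big_ind: _ => // [x y | S /eqP].
  by rewrite leq_min => -> ->.
exact: avoid_ge.
Qed.

End HittingSets.

Section Wreath.
Variables (X : finType) (n : nat).
Implicit Types (A : {set {set X}}) (B : {set {set 'I_n}}) (E S : {set 'I_n * X}).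

Definition slice (i : 'I_n) E : {set X} := [set x | (i, x) \in E].

Definition support E : {set 'I_n} := [set i | slice i E != set0].

Definition slicewise (Y : 'I_n -> {set {set X}}) : {set {set 'I_n * X}} :=
  [set E | [forall i, slice i E \in Y i]].

Definition on_block A (Bs : {set 'I_n}) (i : 'I_n) : {set {set X}} :=
  if i \in Bs then A else [set set0].

Lemma card_slices E : #|E| = \sum_i #|slice i E|.
Proof.
have cardE (Y : finType) (D : {set Y}) : #|D| = \sum_y (y \in D).
  by rewrite -sum1_card big_mkcond; apply: eq_bigr => y _; case: (y \in D).
under eq_bigr => i _ do rewrite (cardE _ (slice i E)).
by rewrite cardE pair_big; apply: eq_big => -[i x] // _; rewrite inE.
Qed.

Lemma disjoint_slices E S :
  [disjoint E & S] = [forall i, [disjoint slice i E & slice i S]].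
Proof.
apply/idP/forallP => [dES i | dslices].
  rewrite -setI_eq0; apply/eqP/setP => x; rewrite !inE.
  by case Ex: ((i, x) \in E); rewrite // (disjointFr dES Ex).
rewrite -setI_eq0; apply/eqP/setP => -[i x]; rewrite !inE.
have := disjointFr (dslices i) (x := x); rewrite !inE.
by case: ((i, x) \in E) => // ->.
Qed.

Lemma card_slicewise Y : #|slicewise Y| = \prod_i #|Y i|.
Proof.
pose glue (f : {dffun forall i : 'I_n, {set X}}) := [set p | p.2 \in f p.1].
have slice_glue f i : slice i (glue f) = f i by apply/setP => x; rewrite !inE.
have -> : slicewise Y = glue @: setXn Y.
  apply/setP => E; rewrite inE; apply/forallP/imsetP => [E_Y | [f /setXnP fY ->] i].
    exists [ffun i => slice i E]; first by apply/setXnP => i; rewrite ffunE.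
    by apply/setP => -[i x]; rewrite !inE ffunE inE.
  by rewrite slice_glue.
rewrite card_imset ?cardsXn // => f g /setP eq_fg.
by apply/ffunP => i; apply/setP => x; have := eq_fg (i, x); rewrite !inE.
Qed.

Lemma avoiding_slicewise Y S :
  avoiding (slicewise Y) S = slicewise (fun i => avoiding (Y i) (slice i S)).
Proof.
apply/setP => E; rewrite !inE disjoint_slices.
apply/andP/forallP => [[/forallP E_Y /forallP dES] i | E_YS].
  by rewrite inE E_Y dES.
by split; apply/forallP => i; have := E_YS i; rewrite inE => /andP[].
Qed.

Lemma in_wreath A B E :
  (E \in wreath A B) = [exists Bs in B, E \in slicewise (on_block A Bs)].
Proof.
rewrite inE; apply: eq_existsb => Bs; congr (_ && _); rewrite inE.
by apply: eq_forallb => i; rewrite /on_block; case: (i \in Bs); rewrite ?inE.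
Qed.

Lemma support_on_block A Bs E :
  set0 \notin A -> E \in slicewise (on_block A Bs) -> support E = Bs.
Proof.
move=> A0 /[!inE] /forallP E_Bs; apply/setP => i; have := E_Bs i.
rewrite inE /on_block; case: (i \in Bs) => [sA | /set1P ->]; last by rewrite eqxx.
by apply: contraNneq A0 => <-.
Qed.

Lemma card_avoiding_wreath A B S : set0 \notin A ->
  #|avoiding (wreath A B) S| = \sum_(Bs in B) \prod_(i in Bs) #|avoiding A (slice i S)|.
Proof.
move=> A0; have supp_in E : E \in wreath A B -> support E \in B.
  by rewrite in_wreath => /exists_inP [Bs BsB /(support_on_block A0) ->].
rewrite -sum1_card (partition_big support (mem B)); last first.
  by move=> E; rewrite inE => /andP[/supp_in].
apply: eq_bigr => Bs BsB.
have -> : \sum_(E | (E \in avoiding (wreath A B) S) && (support E == Bs)) 1 =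
          #|avoiding (slicewise (on_block A Bs)) S|.
  rewrite sum1dep_card; apply: eq_card => E; rewrite inE /= !in_avoiding in_wreath.
  apply/andP/andP => [[/andP[/exists_inP [Bs' _ EBs'] dES] /eqP suppE] | [EBs dES]].
    by split=> //; rewrite -suppE (support_on_block A0 EBs').
  rewrite (support_on_block A0 EBs) eqxx; split=> //.
  by apply/andP; split=> //; apply/exists_inP; exists Bs.
rewrite avoiding_slicewise card_slicewise [RHS]big_mkcond; apply: eq_bigr => i _.
by rewrite /on_block; case: (i \in Bs); rewrite ?avoiding_set0 ?cards1.
Qed.

Lemma slice0 i : slice i set0 = set0.
Proof. by apply/setP => x; rewrite !inE. Qed.

Lemma card_wreath A B r : set0 \notin A -> uniform r B ->
  #|wreath A B| = #|B| * #|A| ^ r.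
Proof.
move=> A0 unifB.
rewrite -(avoiding0 (wreath A B)) card_avoiding_wreath // -sum_nat_const.
apply: eq_bigr => Bs /unifB <-; rewrite -prod_nat_const.
by apply: eq_bigr => i _; rewrite slice0 avoiding0.
Qed.

Lemma uniform_wreath A B k r : uniform k A -> uniform r B ->
  uniform (r * k) (wreath A B).
Proof.
move=> unifA unifB E; rewrite in_wreath => /exists_inP [Bs /unifB <- /[!inE]/forallP E_Bs].
rewrite card_slices -sum_nat_const [RHS]big_mkcond; apply: eq_bigr => i _.
have := E_Bs i; rewrite /on_block; case: (i \in Bs) => [/unifA // | /set1P ->].
by rewrite cards0.
Qed.

Lemma on_block_slice A Bs E i :
  E \in slicewise (on_block A Bs) -> i \in Bs -> slice i E \in A.
Proof. by rewrite inE => /forallP/(_ i) + iBs; rewrite /on_block iBs. Qed.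

Lemma intersecting_wreath A B :
  intersecting A -> intersecting B -> intersecting (wreath A B).
Proof.
move=> intA intB E E'; rewrite !in_wreath.
move=> /exists_inP [Bs BsB EBs] /exists_inP [Bs' Bs'B E'Bs'].
have /set0Pn [i /setIP [iBs iBs']] : Bs :&: Bs' != set0 by rewrite setI_eq0 intB.
rewrite disjoint_slices negb_forall; apply/existsP; exists i.
by apply: intA; [apply: on_block_slice EBs iBs | apply: on_block_slice E'Bs' iBs'].
Qed.

Lemma hitting_wreath_setX A B C Z :
  hitting A C -> hitting B Z -> hitting (wreath A B) (setX Z C).
Proof.
move=> /forall_inP hitA /forall_inP hitB; apply/forall_inP => E.
rewrite in_wreath => /exists_inP [Bs /hitB BsZ EBs].
have /set0Pn [i /setIP [iBs iZ]] : Bs :&: Z != set0 by rewrite setI_eq0.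
rewrite disjoint_slices negb_forall; apply/existsP; exists i.
have -> : slice i (setX Z C) = C by apply/setP => x; rewrite !inE iZ.
exact/hitA/(on_block_slice EBs).
Qed.

Lemma hitting_wreath_ge A B S a b : set0 \notin A ->
    (forall C, hitting A C -> a <= #|C|) -> (forall Z, hitting B Z -> b <= #|Z|) ->
  hitting (wreath A B) S -> b * a <= #|S|.
Proof.
move=> A0 hitA_ge hitB_ge hitS.
pose Z := [set i | hitting A (slice i S)].
have /hitB_ge leZ : hitting B Z.
  apply/forall_inP => Bs BsB; move: hitS.
  rewrite hittingE -cards_eq0 card_avoiding_wreath // sum_nat_eq0.
  move=> /forall_inP/(_ Bs BsB); apply: contraTN => dBsZ.
  rewrite -lt0n prodn_cond_gt0 // => i iBs.
  by have := disjointFr dBsZ iBs; rewrite inE hittingE lt0n cards_eq0 => ->.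
apply: (@leq_trans (#|Z| * a)); first by rewrite leq_mul2r leZ orbT.
rewrite card_slices -sum_nat_const big_mkcond; apply: leq_sum => i _.
by case: ifP => // /[!inE] /hitA_ge.
Qed.

End Wreath.

Section BinomSet.
Variable n : nat.

Lemma uniform_binom_set k : uniform k (binom_set n k).
Proof. by move=> Bs /[!inE]/eqP. Qed.

Lemma intersecting_binom_set k : n < k.*2 -> intersecting (binom_set n k).
Proof.
move=> ltnk Bs Bs' /[!inE]/eqP cardBs /eqP cardBs'.
rewrite -setI_eq0 -cards_eq0; have := cardsUI Bs Bs'.
by have := max_card (Bs :|: Bs'); rewrite card_ord; lia.
Qed.

Lemma binom_set_predE :
  binom_set n.+1 n = [set ~: [set k] | k : 'I_n.+1].
Proof.
apply/setP => Bs; rewrite inE; apply/eqP/imsetP => [cardBs | [k _ ->]].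
  have /cards1P [k Bs_k] : #|~: Bs| == 1 by have := cardsC Bs; rewrite card_ord; lia.
  by exists k; rewrite // -Bs_k setCK.
by rewrite cardsC1 card_ord.
Qed.

Lemma sum_binom_set_pred (f : 'I_n.+1 -> nat) :
  \sum_(Bs in binom_set n.+1 n) \prod_(i in Bs) f i = \sum_k \prod_(i | i != k) f i.
Proof.
rewrite binom_set_predE big_imset => [|k l _ _ /setC_inj/set1_inj //].
by apply: eq_bigr => k _; apply: eq_bigl => i; rewrite !inE.
Qed.

Lemma hitting_binom_set_pred Z : hitting (binom_set n.+1 n) Z -> 1 < #|Z|.
Proof.
apply: contraTT; rewrite -leqNgt => leZ1.
have [k Z_k] : exists k, Z \subset [set k].
  have [/eqP | Z_gt0] := posnP #|Z|.
    by rewrite cards_eq0 => /eqP ->; exists ord0; apply: sub0set.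
  have /cards1P [k ->] : #|Z| == 1 by rewrite eqn_leq leZ1.
  by exists k.
apply/forall_inP => /(_ (~: [set k])); rewrite inE cardsC1 card_ord eqxx => /(_ isT).
by rewrite disjoint_sym disjoints_subset setCK Z_k.
Qed.

End BinomSet.

(* Finite sets are locked and do not compute, so facts about the concrete
   family T0 are decided on characteristic bit sequences. *)
Section Charseq.
Variable T : finType.
Implicit Types A B : {set T}.

Definition charseq A : seq bool := [seq x \in A | x <- enum T].

Definition disjointb (s t : seq bool) := ~~ has (fun b => b.1 && b.2) (zip s t).

Lemma size_charseq A : size (charseq A) = #|T|.
Proof. by rewrite size_map cardT. Qed.

Lemma count_charseq A : count id (charseq A) = #|A|.
Proof. by rewrite /charseq enumT count_map cardE /enum_mem size_filter. Qed.

Lemma disjoint_charseq A B : [disjoint A & B] = disjointb (charseq A) (charseq B).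
Proof.
rewrite /disjointb zip_map has_map; apply/pred0P/hasPn => [dAB x _ | ndAB x] /=.
  exact/negbT/dAB.
by apply/negbTE/ndAB; rewrite mem_enum.
Qed.

End Charseq.

Fixpoint bitseqs (m : nat) : seq (seq bool) :=
  if m is m'.+1 then [seq b :: s | b <- [:: true; false], s <- bitseqs m'] else [:: [::]].

Lemma mem_bitseqs s : s \in bitseqs (size s).
Proof. by elim: s => // b s IHs; apply: (allpairs_f (fun b s => b :: s)); case: b. Qed.

Definition T0_triples : seq (nat * nat * nat) :=
  [:: (1, 2, 3); (1, 2, 4); (3, 4, 5); (3, 4, 6); (1, 5, 6);
      (2, 5, 6); (1, 3, 5); (2, 4, 5); (1, 4, 6); (2, 3, 6)].

Definition T0_list : seq {set 'I_6} := [seq tri t.1.1 t.1.2 t.2 | t <- T0_triples].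

Definition triple_code (t : nat * nat * nat) : seq bool :=
  [seq [|| i == t.1.1.-1, i == t.1.2.-1 | i == t.2.-1] | i <- iota 0 6].

Definition T0_codes : seq (seq bool) := map triple_code T0_triples.

Lemma charseq_tri a b c : a.-1 < 6 -> b.-1 < 6 -> c.-1 < 6 ->
  charseq (tri a b c) = triple_code (a, b, c).
Proof.
move=> lta ltb ltc; rewrite /charseq /triple_code -val_enum_ord -[RHS]map_comp.
apply: eq_map => i; have eq_inord k : k < 6 -> (i == inord k) = (val i == k).
  by move=> ltk; rewrite -val_eqE /= inordK.
by rewrite /= !inE !eq_inord // orbA.
Qed.

Lemma map_charseq_T0 : [seq charseq X | X <- T0_list] = T0_codes.
Proof. by rewrite /= !charseq_tri. Qed.

Lemma mem_T0 X : (X \in T0) = (X \in T0_list).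
Proof. by rewrite !inE /= !orbA. Qed.

Lemma charseq_T0 X : X \in T0 -> charseq X \in T0_codes.
Proof. by rewrite mem_T0 -map_charseq_T0; apply: map_f. Qed.

Lemma uniq_T0_list : uniq T0_list.
Proof. by apply: (@map_uniq _ _ (@charseq _)); rewrite map_charseq_T0. Qed.

Lemma card_T0 : #|T0| = 10.
Proof. by rewrite (eq_card mem_T0) (card_uniqP uniq_T0_list). Qed.

Lemma uniform_T0 : uniform 3 T0.
Proof.
move=> X /charseq_T0 codeX; rewrite -count_charseq; apply/eqP.
by have /allP/(_ _ codeX) : all (fun s => count id s == 3) T0_codes by [].
Qed.

Lemma intersecting_T0 : intersecting T0.
Proof.
move=> X Y /charseq_T0 codeX /charseq_T0 codeY; rewrite disjoint_charseq.
have /allP/(_ _ codeX)/allP/(_ _ codeY) // :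
  all (fun s => all (fun t => ~~ disjointb s t) T0_codes) T0_codes by [].
Qed.

Lemma set0_notin_T0 : set0 \notin T0.
Proof. by apply/negP => /uniform_T0; rewrite cards0. Qed.

Lemma card_avoiding_T0 (A : {set 'I_6}) :
  #|avoiding T0 A| = count (disjointb^~ (charseq A)) T0_codes.
Proof.
rewrite -map_charseq_T0 count_map -size_filter.
rewrite -(card_uniqP (filter_uniq _ uniq_T0_list)); apply: eq_card => X.
by rewrite in_avoiding mem_filter mem_T0 andbC /= disjoint_charseq.
Qed.

(* Each point lies in 5 triples of T0 and each pair in 2: 10, 5 and 10 - 5 - 5 + 2. *)
Definition T0_avoid_bound (k : nat) : nat := nth 0 [:: 10; 5; 2] k.

Lemma avoiding_T0_ge (A : {set 'I_6}) : T0_avoid_bound #|A| <= #|avoiding T0 A|.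
Proof.
rewrite card_avoiding_T0 -count_charseq.
have := mem_bitseqs (charseq A); rewrite size_charseq card_ord.
move: (charseq A); apply/allP; by vm_compute.
Qed.

Lemma hitting_T0_ge (C : {set 'I_6}) : hitting T0 C -> 3 <= #|C|.
Proof.
rewrite hittingE -cards_eq0 => /eqP avoid0; have := avoiding_T0_ge C.
by rewrite avoid0; case: #|C| => [|[|[|]]].
Qed.

Lemma sum_pair_products_ge (a : 'I_3 -> nat) : \sum_i a i = 5 ->
  20 <= \sum_k \prod_(i | i != k) T0_avoid_bound (a i).
Proof.
rewrite !big_ord_recl !big_ord0; do 3 rewrite big_mkcond !big_ord_recl big_ord0 /=.
move: (a _) (a _) (a _) => x y z.
by case: x => [|[|[|x]]]; case: y => [|[|[|y]]]; case: z => [|[|[|z]]];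
  rewrite /T0_avoid_bound /=; lia.
Qed.

Lemma card_avoiding_F0 S :
  #|avoiding F0 S| = \sum_k \prod_(i | i != k) #|avoiding T0 (slice i S)|.
Proof. by rewrite card_avoiding_wreath ?set0_notin_T0 // sum_binom_set_pred. Qed.

Lemma uniform_F0 : uniform 6 F0.
Proof. exact: uniform_wreath uniform_T0 (@uniform_binom_set 3 2). Qed.

Lemma intersecting_F0 : intersecting F0.
Proof. exact: intersecting_wreath intersecting_T0 (@intersecting_binom_set 3 2 isT). Qed.

Lemma card_F0 : #|F0| = 300.
Proof.
by rewrite (card_wreath set0_notin_T0 (@uniform_binom_set 3 2)) card_T0 card_draws card_ord.
Qed.

Lemma tau_F0 : tau F0 = 6.
Proof.
apply/eqP; rewrite eqn_leq; apply/andP; split.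
  have T0_C : tri 1 2 3 \in T0 by rewrite !inE eqxx.
  have B_Bs : ~: [set ord0] \in binom_set 3 2 by rewrite inE cardsC1 card_ord.
  have hitF0 := hitting_wreath_setX (intersecting_hitting intersecting_T0 T0_C)
    (intersecting_hitting (@intersecting_binom_set 3 2 isT) B_Bs).
  by rewrite (leq_trans (tau_le_hitting hitF0)) // cardsX (uniform_T0 T0_C) cardsC1 card_ord.
apply: tau_ge => [|S]; first by rewrite card_prod !card_ord.
exact: hitting_wreath_ge set0_notin_T0 hitting_T0_ge (@hitting_binom_set_pred 2).
Qed.

Lemma gamma_F0 : 20 <= gamma 5 F0.
Proof.
apply: gamma_ge => [|S cardS]; first by rewrite card_F0.
rewrite card_avoiding_F0.
apply: leq_trans (sum_pair_products_ge (a := fun i => #|slice i S|) _) _.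
  by rewrite -card_slices.
by apply: leq_sum => k _; apply: leq_prod => i _; apply: avoiding_T0_ge.
Qed.

Theorem proposition5p8 :
  m_ge 5 6 20 /\
  [/\ uniform 6 F0, #|F0| = 300, intersecting F0, tau F0 = 6 & 20 <= gamma 5 F0].
Proof.
split; last by split; [exact: uniform_F0 | exact: card_F0 | exact: intersecting_F0
                    | exact: tau_F0 | exact: gamma_F0].
exists ('I_3 * 'I_6)%type, F0.
by split; [exact: uniform_F0 | exact: intersecting_F0 | exact: tau_F0 | exact: gamma_F0].
Qed.
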